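(* Let $T:[0,1]\to\mathbb{R}$ be Takagi's function, $T(x)=\sum_{n=1}^\infty 2^{-n}\phi^{(n)}(x)$, where $\phi(x)=2x$ for $0\le x\le 1/2$, $\phi(x)=2-2x$ for $1/2\le x\le 1$, and $\phi^{(n)}$ denotes the $n$-fold composition of $\phi$. Let $x\in(0,1)$ be non-dyadic (i.e. not of the form $k/2^m$ with integers $k,m$), and write $$x=\sum_{n=1}^\infty 2^{-a_n},\qquad 1-x=\sum_{n=1}^\infty 2^{-b_n},$$ where $\{a_n\}$ and $\{b_n\}$ are strictly increasing sequences of positive integers (uniquely determined by $x$). Then: (i) $T'_+(x)=+\infty$ if and only if $a_n-2n\to\infty$; (ii) $T'_-(x)=+\infty$ if and only if $a_{n+1}-2a_n+2n-\log_2(a_{n+1}-a_n)\to-\infty$ as $n\to\infty$; (iii) $T'_+(x)=-\infty$ if and only if $b_{n+1}-2b_n+2n-\log_2(b_{n+1}-b_n)\to-\infty$ as $n\to\infty$; (iv) $T'_-(x)=-\infty$ if and only if $b_n-2n\to\infty$.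
   Context: $T'_+(x):=\lim_{h\downarrow 0}\frac{T(x+h)-T(x)}{h}$ and $T'_-(x):=\lim_{h\uparrow 0}\frac{T(x+h)-T(x)}{h}$, whenever these limits exist as extended real numbers. Thus $a_n$ are the positions of the ones and $b_n$ the positions of the zeros in the binary expansion of $x$. *)

From Stdlib Require Import Reals Lra.
From Coquelicot Require Import Coquelicot.
Open Scope R_scope.

Definition phi (x : R) : R := if Rle_dec x (1/2) then 2 * x else 2 - 2 * x.

Definition takagi (x : R) : R :=
  Series (fun k : nat => (/2) ^ (S k) * Nat.iter (S k) phi x).

Definition dyadic (x : R) : Prop :=
  exists (k : Z) (m : nat), x = IZR k / 2 ^ m.

Definition right_deriv_is (f : R -> R) (x : R) (l : Rbar) : Prop :=
  filterlim (fun h => (f (x + h) - f x) / h) (at_right 0) (Rbar_locally l).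
Definition left_deriv_is (f : R -> R) (x : R) (l : Rbar) : Prop :=
  filterlim (fun h => (f (x + h) - f x) / h) (at_left 0) (Rbar_locally l).

Definition log2 (y : R) : R := ln y / ln 2.

(* a (indexed from 1) lists the positions of the binary digits 1 of y:
   a_1 < a_2 < ..., a_1 >= 1, and y = sum_{n>=1} 2^{-a_n}. *)
Definition binary_positions (a : nat -> nat) (y : R) : Prop :=
  (1 <= a 1)%nat /\ (forall n, (1 <= n)%nat -> (a n < a (S n))%nat) /\
  is_series (fun k : nat => (/2) ^ (a (S k))) y.

(* Takagi's function is self-affine on dyadic intervals: on [K/2^m, (K+1)/2^m] it is the chord
   plus 2^-m T(2^m y - K), and the chord slope at the truncation of x to its first n binary ones
   is a_n - 2n.  Hence a left difference quotient of T at x whose increment is of order 2^-a_(n+1)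
   equals a_(n+1) - 2(n+1) plus a correction governed by the gap k = a_(n+2) - a_(n+1): the
   correction never exceeds k + 1, and its infimum is log2 k - k up to a bounded error.  The symmetry
   T(1 - y) = T(y) turns right derivatives at x into left derivatives at 1 - x, whose ones sit
   at the positions b, and the identity #{n | a_n <= m} + #{n | b_n <= m} = m translates
   a_(n+1) - 2n -> -oo into b_n - 2n -> +oo. *)

From Stdlib Require Import Reals Lra Lia.
From Coquelicot Require Import Coquelicot.
Open Scope R_scope.

Lemma phi_1m w : phi (1 - w) = phi w.
Proof. unfold phi; destruct (Rle_dec (1 - w) (1/2)), (Rle_dec w (1/2)); lra. Qed.

Lemma phi_unit w : 0 <= w <= 1 -> 0 <= phi w <= 1.
Proof. unfold phi; destruct (Rle_dec w (1/2)); lra. Qed.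

Lemma iter_phi_unit n w : 0 <= w <= 1 -> 0 <= Nat.iter n phi w <= 1.
Proof. intros Hw; induction n as [|n IH]; [exact Hw | exact (phi_unit _ IH)]. Qed.

Definition takagi_term w k := (/2) ^ (S k) * Nat.iter (S k) phi w.

Lemma takagi_term_bounds w k : 0 <= w <= 1 -> 0 <= takagi_term w k <= (/2) ^ (S k).
Proof.
  intros Hw; unfold takagi_term.
  pose proof (iter_phi_unit (S k) w Hw).
  assert (0 < (/2) ^ (S k)) by (apply pow_lt; lra).
  nra.
Qed.

Lemma Series_half_pow : Series (fun k => (/2) ^ (S k)) = 1.
Proof.
  rewrite (Series_ext _ (fun k => /2 * (/2) ^ k)) by (intros; simpl; ring).
  rewrite Series_scal_l, Series_geom; [field | rewrite Rabs_pos_eq; lra].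
Qed.

Lemma ex_series_half_pow : ex_series (fun k => (/2) ^ (S k)).
Proof.
  apply ex_series_ext with (a := fun k => /2 * (/2) ^ k); [intros; simpl; ring|].
  apply (ex_series_scal_l (/2) (fun k => (/2) ^ k)), ex_series_geom.
  rewrite Rabs_pos_eq; lra.
Qed.

Lemma ex_series_takagi_term w : 0 <= w <= 1 -> ex_series (takagi_term w).
Proof.
  intros Hw. apply (ex_series_le (takagi_term w) (fun k => (/2) ^ (S k)));
    [|exact ex_series_half_pow].
  intros k. destruct (takagi_term_bounds w k Hw).
  change (Rabs (takagi_term w k) <= (/2) ^ (S k)). rewrite Rabs_pos_eq; lra.
Qed.

Lemma takagi_bounds w : 0 <= w <= 1 -> 0 <= takagi w <= 1.
Proof.
  intros Hw. unfold takagi; fold (takagi_term w). split.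
  - replace 0 with (Series (fun _ => 0)).
    + apply Series_le; [|apply ex_series_takagi_term, Hw].
      intros k; split; [lra | apply takagi_term_bounds, Hw].
    + rewrite (Series_ext _ (fun n => 0 * (fun _ => 1) n)) by (intros; ring).
      rewrite Series_scal_l; ring.
  - rewrite <- Series_half_pow. apply Series_le; [|exact ex_series_half_pow].
    intros k; apply takagi_term_bounds, Hw.
Qed.

Lemma div_unit_interval v d : 0 < d -> 0 <= v <= d -> 0 <= v / d <= 1.
Proof.
  intros Hd Hv. split; [apply Rdiv_le_0_compat; lra|].
  apply (Rdiv_le_1 v d Hd); lra.
Qed.

Lemma takagi_1m w : takagi (1 - w) = takagi w.
Proof. unfold takagi. apply Series_ext; intros k. now rewrite !Nat.iter_succ_r, phi_1m. Qed.

Lemma takagi_phi w : 0 <= w <= 1 -> takagi w = phi w / 2 + takagi (phi w) / 2.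
Proof.
  intros Hw. unfold takagi; fold (takagi_term w) (takagi_term (phi w)).
  rewrite Series_incr_1 by (apply ex_series_takagi_term, Hw).
  rewrite (Series_ext (fun k => takagi_term w (S k)) (fun k => /2 * takagi_term (phi w) k)).
  - rewrite Series_scal_l. unfold takagi_term; simpl. field.
  - intros k; unfold takagi_term. rewrite (Nat.iter_succ_r (S k)). simpl. ring.
Qed.

Lemma takagi_0 : takagi 0 = 0.
Proof.
  assert (Hphi : phi 0 = 0) by (unfold phi; destruct Rle_dec; lra).
  pose proof (takagi_phi 0 ltac:(lra)) as H. rewrite Hphi in H. lra.
Qed.

Lemma takagi_1 : takagi 1 = 0.
Proof. rewrite <- takagi_0, <- takagi_1m. f_equal; ring. Qed.

Lemma takagi_half u : 0 <= u <= 1 -> takagi (u / 2) = u / 2 + takagi u / 2.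
Proof.
  intros Hu. rewrite takagi_phi by lra.
  replace (phi (u / 2)) with u by (unfold phi; destruct Rle_dec; lra). lra.
Qed.

Lemma takagi_1_2 : takagi (1 / 2) = 1 / 2.
Proof. rewrite takagi_half, takagi_1 by lra. lra. Qed.

Lemma takagi_div_pow2 j u : 0 <= u <= 1 -> takagi (u / 2 ^ j) = (INR j * u + takagi u) / 2 ^ j.
Proof.
  intros Hu. induction j as [|j IH]; [simpl; rewrite !Rdiv_1_r; ring|].
  assert (0 < 2 ^ j) by (apply pow_lt; lra).
  assert (1 <= 2 ^ j) by (apply pow_R1_Rle; lra).
  assert (0 <= u / 2 ^ j <= 1) by (apply div_unit_interval; lra).
  replace (u / 2 ^ S j) with (u / 2 ^ j / 2) by (simpl; field; lra).
  rewrite takagi_half, IH, S_INR by assumption. simpl; field; lra.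
Qed.

Lemma INR_pow2 m : INR (2 ^ m) = 2 ^ m.
Proof. apply pow_INR. Qed.

Lemma takagi_dyadic_affine m K s : (K + 1 <= 2 ^ m)%nat -> 0 <= s <= 1 ->
  takagi ((INR K + s) / 2 ^ m) = takagi (INR K / 2 ^ m)
     + s * (takagi ((INR K + 1) / 2 ^ m) - takagi (INR K / 2 ^ m)) + takagi s / 2 ^ m.
Proof.
  revert K s. induction m as [|m IH]; intros K s HK Hs.
  { simpl in HK. replace K with 0%nat by lia. simpl.
    rewrite !Rdiv_1_r, Rplus_0_l, Rplus_0_l, takagi_0, takagi_1. ring. }
  assert (P : 0 < 2 ^ m) by (apply pow_lt; lra).
  assert (Hhalf : forall v, 0 <= v <= 2 ^ m ->
            takagi (v / 2 ^ S m) = v / 2 ^ S m + takagi (v / 2 ^ m) / 2).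
  { intros v Hv. replace (v / 2 ^ S m) with (v / 2 ^ m / 2) by (simpl; field; lra).
    rewrite takagi_half by (apply div_unit_interval; lra). simpl; field; lra. }
  destruct (Compare_dec.le_lt_dec (K + 1) (2 ^ m)) as [Hleft|Hright].
  - assert (HK' : INR K + 1 <= 2 ^ m)
      by (rewrite <- INR_pow2, <- S_INR; apply le_INR; lia).
    pose proof (pos_INR K).
    rewrite !Hhalf by lra. rewrite IH by assumption. simpl; field; lra.
  - (* the right half is reflected onto the left one by [takagi_1m] *)
    set (K' := (2 ^ S m - 1 - K)%nat).
    assert (EK : INR K' = 2 ^ S m - 1 - INR K).
    { unfold K'. rewrite !minus_INR, INR_pow2 by (simpl in *; lia). simpl; lra. }
    assert (P' : 0 < 2 ^ S m) by (apply pow_lt; lra).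
    assert (HK' : (K' + 1 <= 2 ^ m)%nat) by (unfold K'; simpl in *; lia).
    assert (HK'R : INR K' + 1 <= 2 ^ m)
      by (rewrite <- INR_pow2, <- S_INR; apply le_INR; lia).
    pose proof (pos_INR K').
    rewrite <- (takagi_1m ((INR K + s) / _)), <- (takagi_1m (INR K / _)),
            <- (takagi_1m ((INR K + 1) / _)), <- (takagi_1m s).
    replace (1 - (INR K + s) / 2 ^ S m) with ((INR K' + (1 - s)) / 2 ^ S m)
      by (rewrite EK; field; lra).
    replace (1 - INR K / 2 ^ S m) with ((INR K' + 1) / 2 ^ S m) by (rewrite EK; field; lra).
    replace (1 - (INR K + 1) / 2 ^ S m) with (INR K' / 2 ^ S m) by (rewrite EK; field; lra).
    rewrite !Hhalf by lra. rewrite (IH K' (1 - s)) by (assumption || lra).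
    simpl; field; lra.
Qed.

Definition dyadic_slope m K := 2 ^ m * (takagi ((INR K + 1) / 2 ^ m) - takagi (INR K / 2 ^ m)).

Lemma takagi_dyadic_slope m K s : (K + 1 <= 2 ^ m)%nat -> 0 <= s <= 1 ->
  takagi ((INR K + s) / 2 ^ m) = takagi (INR K / 2 ^ m) + (s * dyadic_slope m K + takagi s) / 2 ^ m.
Proof.
  intros HK Hs. rewrite takagi_dyadic_affine by assumption. unfold dyadic_slope.
  field. apply pow_nonzero; lra.
Qed.

Lemma dyadic_slope_double m K : (K + 1 <= 2 ^ m)%nat ->
  dyadic_slope (S m) (2 * K) = dyadic_slope m K + 1.
Proof.
  intros HK. unfold dyadic_slope. assert (0 < 2 ^ m) by (apply pow_lt; lra).
  rewrite mult_INR; change (INR 2) with 2.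
  replace ((2 * INR K + 1) / 2 ^ S m) with ((INR K + 1 / 2) / 2 ^ m) by (simpl; field; lra).
  replace (2 * INR K / 2 ^ S m) with (INR K / 2 ^ m) by (simpl; field; lra).
  rewrite takagi_dyadic_affine, takagi_1_2 by (assumption || lra). simpl; field; lra.
Qed.

Lemma dyadic_slope_double_S m K : (K + 1 <= 2 ^ m)%nat ->
  dyadic_slope (S m) (2 * K + 1) = dyadic_slope m K - 1.
Proof.
  intros HK. unfold dyadic_slope. assert (0 < 2 ^ m) by (apply pow_lt; lra).
  rewrite plus_INR, mult_INR; change (INR 2) with 2; change (INR 1) with 1.
  replace ((2 * INR K + 1 + 1) / 2 ^ S m) with ((INR K + 1) / 2 ^ m) by (simpl; field; lra).
  replace ((2 * INR K + 1) / 2 ^ S m) with ((INR K + 1 / 2) / 2 ^ m) by (simpl; field; lra).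
  rewrite (takagi_dyadic_affine m K (1 / 2)), takagi_1_2 by (assumption || lra).
  simpl; field; lra.
Qed.

Lemma dyadic_slope_mul_pow2 m K j : (K + 1 <= 2 ^ m)%nat ->
  dyadic_slope (m + j) (K * 2 ^ j) = dyadic_slope m K + INR j.
Proof.
  intros HK. induction j as [|j IH]; [rewrite Nat.add_0_r, Nat.mul_1_r; simpl; ring|].
  replace (m + S j)%nat with (S (m + j)) by lia.
  replace (K * 2 ^ S j)%nat with (2 * (K * 2 ^ j))%nat by (simpl; lia).
  rewrite dyadic_slope_double, IH, S_INR; [ring|].
  rewrite Nat.pow_add_r. pose proof (Nat.pow_nonzero 2 j). nia.
Qed.

(* [pos a] extends [a] by a_0 := 0, and [numer a n / 2 ^ pos a n] is the truncation
   2^-a_1 + ... + 2^-a_n of the binary expansion. *)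
Definition pos (a : nat -> nat) n := match n with O => O | S _ => a n end.

Fixpoint numer (a : nat -> nat) n : nat :=
  match n with
  | O => O
  | S k => numer a k * 2 ^ (pos a (S k) - pos a k) + 1
  end.

Definition trunc a n := INR (numer a n) / 2 ^ pos a n.

Lemma binary_positions_pos_lt a y : binary_positions a y -> forall n, (pos a n < pos a (S n))%nat.
Proof. intros [H1 [H2 _]] [|n]; simpl; [lia | apply H2; lia]. Qed.

Section Truncations.
Variable a : nat -> nat.
Hypothesis pos_lt : forall n, (pos a n < pos a (S n))%nat.

Lemma pos_ge n : (n <= pos a n)%nat.
Proof. induction n; [simpl; lia|]. pose proof (pos_lt n). lia. Qed.

Lemma pos_le_mono n m : (n <= m)%nat -> (pos a n <= pos a m)%nat.
Proof. induction 1; [lia|]. pose proof (pos_lt m). lia. Qed.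

Lemma pos_lt_mono n m : (n < m)%nat -> (pos a n < pos a m)%nat.
Proof. intros H. pose proof (pos_lt n). pose proof (pos_le_mono (S n) m H). lia. Qed.

Lemma numer_succ_le n : (numer a n + 1 <= 2 ^ pos a n)%nat.
Proof.
  induction n as [|n IH]; [simpl; lia|].
  pose proof (pos_lt n). set (d := (pos a (S n) - pos a n)%nat).
  change (numer a (S n)) with (numer a n * 2 ^ d + 1)%nat.
  replace (2 ^ pos a (S n))%nat with (2 ^ pos a n * 2 ^ d)%nat
    by (rewrite <- Nat.pow_add_r; f_equal; unfold d; lia).
  assert (2 ^ 1 <= 2 ^ d)%nat by (apply Nat.pow_le_mono_r; unfold d; lia).
  simpl in *. nia.
Qed.

Lemma trunc_0 : trunc a 0 = 0.
Proof. unfold trunc; simpl; field. Qed.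

Lemma trunc_S n : trunc a (S n) = trunc a n + / 2 ^ pos a (S n).
Proof.
  unfold trunc. simpl numer. pose proof (pos_lt n). set (d := (pos a (S n) - pos a n)%nat).
  replace (pos a (S n)) with (pos a n + d)%nat by (unfold d; lia).
  rewrite plus_INR, mult_INR, INR_pow2, pow_add. change (a (S n) - pos a n)%nat with d.
  simpl INR. field. split; apply pow_nonzero; lra.
Qed.

Lemma trunc_le_mono n m : (n <= m)%nat -> trunc a n <= trunc a m.
Proof.
  induction 1; [lra|]. rewrite trunc_S.
  assert (0 < / 2 ^ pos a (S m)) by (apply Rinv_0_lt_compat, pow_lt; lra). lra.
Qed.

Lemma trunc_sub_le n m : (n <= m)%nat -> trunc a m - trunc a n <= / 2 ^ pos a n - / 2 ^ pos a m.
Proof.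
  induction 1 as [|m Hnm IH]; [lra|]. rewrite trunc_S.
  assert (0 < 2 ^ pos a m) by (apply pow_lt; lra).
  assert (2 * 2 ^ pos a m <= 2 ^ pos a (S m)).
  { change (2 * 2 ^ pos a m) with (2 ^ S (pos a m)). apply Rle_pow; [lra | apply pos_lt]. }
  assert (/ 2 ^ pos a (S m) <= / (2 * 2 ^ pos a m)) by (apply Rinv_le_contravar; lra).
  rewrite Rinv_mult in *. lra.
Qed.

Lemma sum_n_trunc N : sum_n (fun k => (/2) ^ a (S k)) N = trunc a (S N).
Proof.
  induction N as [|N IH].
  - rewrite sum_O, trunc_S, trunc_0, Rplus_0_l, pow_inv. reflexivity.
  - rewrite sum_Sn, IH, (trunc_S (S N)), pow_inv. reflexivity.
Qed.

Lemma dyadic_slope_trunc n : dyadic_slope (pos a n) (numer a n) = INR (pos a n) - 2 * INR n.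
Proof.
  induction n as [|n IH].
  - unfold dyadic_slope. simpl. rewrite !Rdiv_1_r, Rplus_0_l, takagi_0, takagi_1. ring.
  - pose proof (pos_lt n). set (d := (pos a (S n) - pos a n)%nat).
    assert (Epos : pos a (S n) = S (pos a n + (d - 1))) by (unfold d; lia).
    assert (Enum : numer a (S n) = (2 * (numer a n * 2 ^ (d - 1)) + 1)%nat).
    { change (numer a (S n)) with (numer a n * 2 ^ d + 1)%nat.
      replace d with (S (d - 1)) at 1 by (unfold d; lia). simpl; lia. }
    assert (Hd : (1 <= d)%nat) by (unfold d; lia). clearbody d.
    pose proof (numer_succ_le n).
    rewrite Epos, Enum, dyadic_slope_double_S, dyadic_slope_mul_pow2, IH by
      (try rewrite Nat.pow_add_r; pose proof (Nat.pow_nonzero 2 (d - 1)); nia).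
    rewrite !S_INR, plus_INR, minus_INR by lia. simpl INR. ring.
Qed.

Lemma dyadic_slope_trunc_shift n :
  dyadic_slope (pos a (S n)) (numer a n * 2 ^ (pos a (S n) - pos a n))
  = INR (pos a (S n)) - 2 * INR (S n) + 2.
Proof.
  pose proof (pos_lt n).
  replace (pos a (S n)) with (pos a n + (pos a (S n) - pos a n))%nat at 1 by lia.
  rewrite dyadic_slope_mul_pow2, dyadic_slope_trunc by apply numer_succ_le.
  rewrite minus_INR, S_INR by lia. ring.
Qed.

End Truncations.

Definition left_quotient (f : R -> R) x h := (f x - f (x - h)) / h.

Definition quotient_correction t r := (2 * r + takagi t - takagi r) / (r + t).

Definition scaled_tail a z n := 2 ^ pos a n * z - INR (numer a n).

Section Expansion.
Variable a : nat -> nat.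
Variable z : R.
Hypothesis pos_lt : forall n, (pos a n < pos a (S n))%nat.
Hypothesis z_series : is_series (fun k => (/2) ^ a (S k)) z.

Lemma is_lim_seq_trunc : is_lim_seq (fun N => trunc a (S N)) z.
Proof.
  apply is_lim_seq_ext with (u := sum_n (fun k => (/2) ^ a (S k))); [|exact z_series].
  intros N. apply sum_n_trunc, pos_lt.
Qed.

Lemma trunc_le m : trunc a m <= z.
Proof.
  change (Rbar_le (trunc a m) z).
  apply (is_lim_seq_le (fun _ => trunc a m) (fun N => trunc a (S (N + m))) (trunc a m) z).
  - intros N. apply trunc_le_mono; [exact pos_lt | lia].
  - apply is_lim_seq_const.
  - apply (is_lim_seq_incr_n (fun N => trunc a (S N)) m), is_lim_seq_trunc.
Qed.

Lemma le_trunc_add n : z <= trunc a n + / 2 ^ pos a n.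
Proof.
  change (Rbar_le z (trunc a n + / 2 ^ pos a n)).
  apply (is_lim_seq_le (fun N => trunc a (S N)) (fun _ => trunc a n + / 2 ^ pos a n) z).
  - intros N. assert (0 < / 2 ^ pos a (S N)) by (apply Rinv_0_lt_compat, pow_lt; lra).
    assert (0 < / 2 ^ pos a n) by (apply Rinv_0_lt_compat, pow_lt; lra).
    destruct (Compare_dec.le_lt_dec (S N) n).
    + pose proof (trunc_le_mono a pos_lt (S N) n ltac:(lia)). lra.
    + pose proof (trunc_sub_le a pos_lt n (S N) ltac:(lia)). lra.
  - exact is_lim_seq_trunc.
  - apply is_lim_seq_const.
Qed.

Lemma trunc_lt n : trunc a n < z.
Proof.
  pose proof (trunc_le (S n)). rewrite trunc_S in * by exact pos_lt.
  assert (0 < / 2 ^ pos a (S n)) by (apply Rinv_0_lt_compat, pow_lt; lra). lra.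
Qed.

Lemma scaled_tail_eq n : scaled_tail a z n = 2 ^ pos a n * (z - trunc a n).
Proof. unfold scaled_tail, trunc. field. apply pow_nonzero; lra. Qed.

Lemma scaled_tail_pos n : 0 < scaled_tail a z n.
Proof.
  rewrite scaled_tail_eq. pose proof (trunc_lt n).
  apply Rmult_lt_0_compat; [apply pow_lt |]; lra.
Qed.

Lemma scaled_tail_S n : scaled_tail a z (S n) = 2 ^ (pos a (S n) - pos a n) * scaled_tail a z n - 1.
Proof.
  unfold scaled_tail. pose proof (pos_lt n).
  change (numer a (S n)) with (numer a n * 2 ^ (pos a (S n) - pos a n) + 1)%nat.
  rewrite plus_INR, mult_INR, INR_pow2.
  replace (pos a (S n)) with (pos a n + (pos a (S n) - pos a n))%nat at 1 by lia.
  rewrite pow_add. simpl INR. ring.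
Qed.

Hypothesis z_nondyadic : ~ dyadic z.

Lemma scaled_tail_lt_1 n : scaled_tail a z n < 1.
Proof.
  rewrite scaled_tail_eq. pose proof (le_trunc_add n) as Hle.
  assert (P : 0 < 2 ^ pos a n) by (apply pow_lt; lra).
  destruct (Rle_lt_or_eq_dec z (trunc a n + / 2 ^ pos a n) Hle) as [Hlt|Heq].
  - apply (Rmult_lt_reg_r (/ 2 ^ pos a n)); [apply Rinv_0_lt_compat, P|].
    field_simplify; lra.
  - exfalso. apply z_nondyadic. exists (Z.of_nat (numer a n + 1)), (pos a n).
    rewrite <- INR_IZR_INZ, plus_INR, Heq. unfold trunc. simpl. field. lra.
Qed.

Lemma scaled_tail_bounds n :
  / 2 ^ (pos a (S n) - pos a n) < scaled_tail a z n < 2 / 2 ^ (pos a (S n) - pos a n).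
Proof.
  pose proof (scaled_tail_S n). pose proof (scaled_tail_pos (S n)).
  pose proof (scaled_tail_lt_1 (S n)).
  set (P := 2 ^ (pos a (S n) - pos a n)) in *. assert (0 < P) by (apply pow_lt; lra).
  split; apply (Rmult_lt_reg_l P); auto; field_simplify; lra.
Qed.

(* With m = a_(n+1) and t the scaled tail, z = (N + t) / 2^m and z - h = (N - 1 + (1 - r)) / 2^m
   lie in adjacent dyadic intervals of length 2^-m, on each of which [takagi_dyadic_slope] applies. *)
Lemma left_quotient_takagi n r : 0 < r <= 1 ->
  left_quotient takagi z ((r + scaled_tail a z (S n)) / 2 ^ pos a (S n))
  = INR (pos a (S n)) - 2 * INR (S n) + quotient_correction (scaled_tail a z (S n)) r.
Proof.
  intros Hr. unfold left_quotient, quotient_correction.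
  set (m := pos a (S n)). set (t := scaled_tail a z (S n)).
  set (K := (numer a n * 2 ^ (pos a (S n) - pos a n))%nat).
  pose proof (scaled_tail_pos (S n)) as Htpos. pose proof (scaled_tail_lt_1 (S n)) as Htlt.
  fold t in Htpos, Htlt.
  assert (P : 0 < 2 ^ m) by (apply pow_lt; lra).
  assert (HNK : numer a (S n) = (K + 1)%nat) by reflexivity.
  assert (Hz : z = (INR K + 1 + t) / 2 ^ m).
  { rewrite <- S_INR, <- Nat.add_1_r, <- HNK. unfold t, scaled_tail; fold m; field; lra. }
  assert (HK1 : (K + 1 + 1 <= 2 ^ m)%nat) by (rewrite <- HNK; apply numer_succ_le, pos_lt).
  assert (HK : (K + 1 <= 2 ^ m)%nat) by lia.
  replace (z - (r + t) / 2 ^ m) with ((INR K + (1 - r)) / 2 ^ m) by (rewrite Hz; field; lra).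
  rewrite Hz. replace (INR K + 1 + t) with (INR (K + 1) + t) by (rewrite plus_INR; reflexivity).
  rewrite (takagi_dyadic_slope m (K + 1) t) by (assumption || lra).
  rewrite plus_INR; change (INR 1) with 1.
  rewrite (takagi_dyadic_slope m K (1 - r)), (takagi_dyadic_slope m K 1) by (assumption || lra).
  rewrite takagi_1, takagi_1m, <- HNK.
  unfold K, m. rewrite dyadic_slope_trunc_shift, dyadic_slope_trunc by exact pos_lt.
  fold m. field. split; lra.
Qed.

End Expansion.

Lemma exists_dyadic_scale r : 0 < r <= 1 -> exists j, / 2 ^ S j < r <= / 2 ^ j.
Proof.
  intros Hr.
  destruct (pow_lt_1_zero (/2) ltac:(rewrite Rabs_pos_eq; lra) r ltac:(lra)) as [N HN].
  specialize (HN N (le_n _)). rewrite Rabs_pos_eq in HN by (apply pow_le; lra).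
  assert (Hr1 : r <= 1) by lra. clear Hr. revert r HN Hr1. induction N as [|N IH]; intros r Hr Hr1; [simpl in Hr; lra|].
  destruct (Rlt_le_dec (/2) r) as [Hhalf|Hhalf].
  - exists 0%nat. simpl. lra.
  - destruct (IH (2 * r)) as [j Hj]; [simpl in Hr; lra | lra |].
    exists (S j). assert (0 < 2 ^ j) by (apply pow_lt; lra).
    simpl in *. rewrite !Rinv_mult in *. lra.
Qed.

Lemma takagi_dyadic_scale_bounds j r : / 2 ^ S j < r <= / 2 ^ j ->
  INR j * r <= takagi r <= (INR j + 2) * r.
Proof.
  intros [H1 H2]. assert (P : 0 < 2 ^ j) by (apply pow_lt; lra).
  set (u := 2 ^ j * r).
  assert (Hu : r = u / 2 ^ j) by (unfold u; field; lra).
  assert (Hu1 : / 2 < u <= 1).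
  { unfold u. simpl in H1. rewrite Rinv_mult in H1.
    split; [apply (Rmult_lt_reg_r (/ 2 ^ j)); [apply Rinv_0_lt_compat, P|]|];
      [replace (2 ^ j * r * / 2 ^ j) with r by (field; lra); lra|].
    replace 1 with (2 ^ j * / 2 ^ j) by (field; lra). apply Rmult_le_compat_l; lra. }
  rewrite Hu, takagi_div_pow2 by lra. pose proof (takagi_bounds u ltac:(lra)).
  pose proof (Rinv_0_lt_compat _ P). unfold Rdiv. split; nra.
Qed.

Lemma takagi_bounds_between k t : (1 <= k)%nat -> / 2 ^ k < t < 2 / 2 ^ k ->
  (INR k - 1) * t <= takagi t <= (INR k + 1) * t.
Proof.
  intros Hk Ht. assert (P : 0 < 2 ^ (k - 1)) by (apply pow_lt; lra).
  assert (E : 2 ^ k = 2 * 2 ^ (k - 1)) by (replace k with (S (k - 1)) at 1 by lia; reflexivity).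
  assert (Ek : INR k = INR (k - 1) + 1) by (rewrite minus_INR by lia; simpl; ring).
  destruct (takagi_dyadic_scale_bounds (k - 1) t); [|split; nra].
  replace (S (k - 1)) with k by lia. unfold Rdiv in Ht. rewrite E, Rinv_mult in Ht |- *. lra.
Qed.

Lemma INR_le_pow2 e : INR e <= 2 ^ e.
Proof.
  induction e as [|e IH]; [simpl; lra|]. rewrite S_INR. simpl.
  assert (1 <= 2 ^ e) by (apply pow_R1_Rle; lra). lra.
Qed.

Lemma linear_scale_le_pow2 j p k r : 0 <= r <= / 2 ^ j ->
  (INR j + INR p - INR k) * r <= 2 ^ p / 2 ^ k.
Proof.
  intros Hr. assert (0 < 2 ^ p / 2 ^ k) by (apply Rdiv_lt_0_compat; apply pow_lt; lra).
  destruct (Compare_dec.le_lt_dec (j + p) k) as [L|L].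
  { assert (INR j + INR p <= INR k) by (rewrite <- plus_INR; apply le_INR, L). nra. }
  set (e := (j + p - k)%nat).
  assert (Ee : INR e = INR j + INR p - INR k) by (unfold e; rewrite minus_INR, plus_INR by lia; ring).
  assert (Pj : 0 < 2 ^ j) by (apply pow_lt; lra). assert (Pk : 0 < 2 ^ k) by (apply pow_lt; lra).
  assert (Hsum : 2 ^ p * 2 ^ j = 2 ^ e * 2 ^ k) by (rewrite <- !pow_add; f_equal; unfold e; lia).
  assert (Epow : 2 ^ p / 2 ^ k = 2 ^ e / 2 ^ j).
  { replace (2 ^ p) with (2 ^ e * 2 ^ k / 2 ^ j) by (rewrite <- Hsum; field; lra). field; lra. }
  rewrite <- Ee, Epow. pose proof (INR_le_pow2 e). pose proof (pos_INR e).
  apply Rle_trans with (INR e / 2 ^ j).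
  - unfold Rdiv. apply Rmult_le_compat_l; lra.
  - unfold Rdiv. apply Rmult_le_compat_r; [left; apply Rinv_0_lt_compat |]; lra.
Qed.

Lemma quotient_correction_ge k p t r : (1 <= k)%nat -> (2 ^ p <= k)%nat ->
  / 2 ^ k < t < 2 / 2 ^ k -> 0 < r <= 1 -> INR p - INR k <= quotient_correction t r.
Proof.
  intros Hk Hp Ht Hr.
  destruct (exists_dyadic_scale r Hr) as [j Hj].
  destruct (takagi_dyadic_scale_bounds j r Hj) as [_ Hr_up].
  destruct (takagi_bounds_between k t Hk Ht) as [Ht_low _].
  assert (Pk : 0 < 2 ^ k) by (apply pow_lt; lra).
  assert (Htpos : 0 < t) by (pose proof (Rinv_0_lt_compat _ Pk); lra).
  assert (Hpk : INR p + 1 <= INR k).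
  { rewrite <- S_INR. apply le_INR. pose proof (Nat.pow_gt_lin_r 2 p ltac:(lia)). lia. }
  assert (Hscale : (INR j + INR p - INR k) * r <= (2 * INR k - 1 - INR p) * t).
  { pose proof (linear_scale_le_pow2 j p k r ltac:(lra)).
    assert (2 ^ p <= INR k) by (rewrite <- INR_pow2; apply le_INR, Hp).
    assert (2 ^ p / 2 ^ k <= INR k * t).
    { assert (Hkt : 1 <= 2 ^ k * t).
      { replace 1 with (2 ^ k * / 2 ^ k) by (field; lra). apply Rmult_le_compat_l; lra. }
      apply (Rmult_le_reg_r (2 ^ k)); [exact Pk|]. field_simplify; [|lra].
      pose proof (pos_INR k). nra. }
    pose proof (pos_INR p). nra. }
  unfold quotient_correction. apply (Rmult_le_reg_r (r + t)); [lra|].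
  field_simplify; [|lra]. nra.
Qed.

Lemma quotient_correction_le k t r : (1 <= k)%nat -> / 2 ^ k < t < 2 / 2 ^ k -> 0 < r <= 1 ->
  quotient_correction t r <= INR k + 1.
Proof.
  intros Hk Ht Hr. destruct (takagi_bounds_between k t Hk Ht) as [_ Ht_up].
  assert (0 < / 2 ^ k) by (apply Rinv_0_lt_compat, pow_lt; lra).
  assert (0 <= takagi r) by (apply takagi_bounds; lra).
  assert (1 <= INR k) by (apply (le_INR 1), Hk).
  unfold quotient_correction. apply (Rmult_le_reg_r (r + t)); [lra|].
  field_simplify; [|lra]. nra.
Qed.

(* The choice r = 2^-(k-p) makes takagi r exactly (k - p) r, by [takagi_div_pow2]. *)
Lemma quotient_correction_le_at_pow2 k p t : (1 <= k)%nat -> (k < 2 ^ S p)%nat -> (p <= k)%nat ->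
  / 2 ^ k < t < 2 / 2 ^ k -> quotient_correction t (/ 2 ^ (k - p)) <= INR p - INR k + 10.
Proof.
  intros Hk Hp Hpk Ht.
  assert (Pk : 0 < 2 ^ k) by (apply pow_lt; lra).
  assert (Pkp : 0 < 2 ^ (k - p)) by (apply pow_lt; lra).
  set (r := / 2 ^ (k - p)).
  assert (Hr : r = 2 ^ p / 2 ^ k).
  { unfold r. replace (2 ^ k) with (2 ^ (k - p) * 2 ^ p) by (rewrite <- pow_add; f_equal; lia).
    field. split; apply pow_nonzero; lra. }
  assert (Hrpos : 0 < r) by (apply Rinv_0_lt_compat, Pkp).
  assert (Tr : takagi r = (INR k - INR p) * r).
  { unfold r. rewrite <- Rdiv_1_l, takagi_div_pow2, takagi_1, minus_INR by (lia || lra).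
    field. lra. }
  destruct (takagi_bounds_between k t Hk Ht) as [_ Ht_up].
  assert (Htpos : 0 < t) by (pose proof (Rinv_0_lt_compat _ Pk); lra).
  assert (Hk2 : INR k < 2 * 2 ^ p)
    by (change (2 * 2 ^ p) with (2 ^ S p); rewrite <- INR_pow2; apply lt_INR, Hp).
  assert (Hkt : 2 * INR k * t <= 8 * r).
  { rewrite Hr. unfold Rdiv in *. pose proof (Rinv_0_lt_compat _ Pk). pose proof (pos_INR k). nra. }
  unfold quotient_correction. apply (Rmult_le_reg_r (r + t)); [lra|].
  field_simplify; [|lra]. rewrite Tr. pose proof (pos_INR p). nra.
Qed.

Lemma log2_INR_bounds k : (1 <= k)%nat ->
  INR (Nat.log2 k) <= log2 (INR k) < INR (Nat.log2 k) + 1.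
Proof.
  intros Hk. destruct (Nat.log2_spec k ltac:(lia)) as [Hlow Hup].
  set (p := Nat.log2 k) in *.
  assert (L2 : 0 < ln 2) by (rewrite <- ln_1; apply ln_increasing; lra).
  assert (Hlow' : 2 ^ p <= INR k) by (rewrite <- INR_pow2; apply le_INR, Hlow).
  assert (Hup' : INR k < 2 ^ S p) by (rewrite <- INR_pow2; apply lt_INR, Hup).
  assert (0 < 2 ^ p) by (apply pow_lt; lra).
  unfold log2. split.
  - apply (Rmult_le_reg_r (ln 2)); [exact L2|]. field_simplify; [|lra].
    rewrite <- ln_pow by lra. destruct Hlow' as [Hlt|Heq]; [left; apply ln_increasing; lra|].
    rewrite Heq; lra.
  - apply (Rmult_lt_reg_r (ln 2)); [exact L2|]. field_simplify; [|lra].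
    replace (ln 2 * INR p + ln 2) with (INR (S p) * ln 2) by (rewrite S_INR; ring).
    rewrite <- ln_pow by lra. apply ln_increasing; lra.
Qed.

Lemma left_deriv_is_iff f x l :
  left_deriv_is f x l <-> filterlim (left_quotient f x) (at_right 0) (Rbar_locally l).
Proof.
  assert (Hflip : forall h, (f (x + - h) - f x) / - h = left_quotient f x h).
  { intros h. unfold left_quotient, Rdiv, Rminus. rewrite Rinv_opp. ring. }
  pose proof (filterlim_Ropp_right 0) as Hright. pose proof (filterlim_Ropp_left 0) as Hleft.
  rewrite Ropp_0 in Hright, Hleft. unfold left_deriv_is. split; intros H.
  - apply (filterlim_ext (fun h => (f (x + - h) - f x) / - h)); [exact Hflip|].
    exact (filterlim_comp _ _ _ Ropp (fun h => (f (x + h) - f x) / h) _ _ _ Hright H).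
  - apply (filterlim_ext (fun h => left_quotient f x (- h))).
    + intros h. rewrite <- Hflip, Ropp_involutive. reflexivity.
    + exact (filterlim_comp _ _ _ Ropp (left_quotient f x) _ _ _ Hleft H).
Qed.

Lemma right_deriv_is_reflect f x l : (forall y, f (1 - y) = f y) ->
  right_deriv_is f x l
  <-> filterlim (left_quotient f (1 - x)) (at_right 0) (Rbar_locally (Rbar_opp l)).
Proof.
  intros Hsym.
  assert (Hq : forall h, (f (x + h) - f x) / h = - left_quotient f (1 - x) h).
  { intros h. unfold left_quotient.
    rewrite <- (Hsym (x + h)), <- (Hsym x). replace (1 - (x + h)) with (1 - x - h) by ring.
    unfold Rdiv. ring. }
  unfold right_deriv_is. split; intros H.
  - apply (filterlim_ext (fun h => - ((f (x + h) - f x) / h))).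
    + intros h. rewrite Hq. apply Ropp_involutive.
    + exact (filterlim_comp _ _ _ _ Ropp _ _ _ H (filterlim_Rbar_opp l)).
  - apply (filterlim_ext (fun h => - left_quotient f (1 - x) h)); [intros h; now rewrite Hq|].
    rewrite <- (Rbar_opp_involutive l).
    exact (filterlim_comp _ _ _ _ Ropp _ _ _ H (filterlim_Rbar_opp _)).
Qed.

Lemma filterlim_at_right_0_p_infty (g : R -> R) :
  filterlim g (at_right 0) (Rbar_locally p_infty)
  <-> forall M, exists d, 0 < d /\ forall h, 0 < h < d -> M < g h.
Proof.
  split.
  - intros H M. destruct (H (fun y => M < y)) as [d Hd]; [now exists M|].
    exists d. split; [apply cond_pos|]. intros h Hh. apply Hd; [|lra].
    change (Rabs (h - 0) < d). rewrite Rabs_right; lra.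
  - intros H P [M HP]. destruct (H M) as [d [Hd Hh]]. exists (mkposreal d Hd).
    intros h Hball Hpos. apply HP, Hh. change (Rabs (h - 0) < d) in Hball.
    rewrite Rabs_right in Hball; simpl; lra.
Qed.

Lemma filterlim_at_right_0_m_infty (g : R -> R) :
  filterlim g (at_right 0) (Rbar_locally m_infty)
  <-> forall M, exists d, 0 < d /\ forall h, 0 < h < d -> g h < M.
Proof.
  split.
  - intros H M. destruct (H (fun y => y < M)) as [d Hd]; [now exists M|].
    exists d. split; [apply cond_pos|]. intros h Hh. apply Hd; [|lra].
    change (Rabs (h - 0) < d). rewrite Rabs_right; lra.
  - intros H P [M HP]. destruct (H M) as [d [Hd Hh]]. exists (mkposreal d Hd).
    intros h Hball Hpos. apply HP, Hh. change (Rabs (h - 0) < d) in Hball.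
    rewrite Rabs_right in Hball; simpl; lra.
Qed.

Definition left_exponent (a : nat -> nat) n :=
  INR (a (S n)) - 2 * INR (a n) + 2 * INR n - log2 (INR (a (S n)) - INR (a n)).

Section LeftDerivative.
Variable a : nat -> nat.
Variable z : R.
Hypothesis pos_lt : forall n, (pos a n < pos a (S n))%nat.
Hypothesis z_series : is_series (fun k => (/2) ^ a (S k)) z.
Hypothesis z_nondyadic : ~ dyadic z.

Lemma pos_eventually_small d : 0 < d -> exists N, forall n, (N <= n)%nat -> 2 / 2 ^ pos a n < d.
Proof.
  intros Hd.
  destruct (pow_lt_1_zero (/2) ltac:(rewrite Rabs_pos_eq; lra) (d / 2) ltac:(lra)) as [N HN].
  exists N. intros n Hn. specialize (HN n Hn).
  rewrite Rabs_pos_eq, pow_inv in HN by (apply pow_le; lra).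
  assert (2 ^ n <= 2 ^ pos a n) by (apply Rle_pow; [lra | apply pos_ge, pos_lt]).
  assert (0 < 2 ^ n) by (apply pow_lt; lra).
  assert (/ 2 ^ pos a n <= / 2 ^ n) by (apply Rinv_le_contravar; lra).
  unfold Rdiv. lra.
Qed.

Lemma exists_trunc_bracket w n0 M : trunc a n0 <= w -> w < trunc a M ->
  exists n, (n0 <= n)%nat /\ trunc a n <= w < trunc a (S n).
Proof.
  induction M as [|M IH]; intros H1 H2.
  - pose proof (trunc_le_mono a pos_lt 0 n0 ltac:(lia)). rewrite trunc_0 in *. lra.
  - destruct (Rlt_le_dec w (trunc a M)) as [L|L]; [now apply IH|].
    exists M. split; [|lra]. destruct (Compare_dec.le_lt_dec n0 M) as [|Hlt]; [assumption|].
    pose proof (trunc_le_mono a pos_lt (S M) n0 Hlt). lra.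
Qed.

Lemma left_increment_decompose N h : 0 < h < z - trunc a N ->
  exists n r, (N <= n)%nat /\ 0 < r <= 1 /\ h = (r + scaled_tail a z (S n)) / 2 ^ pos a (S n).
Proof.
  intros Hh. destruct (pos_eventually_small h ltac:(lra)) as [M HM]. specialize (HM M (le_n _)).
  pose proof (le_trunc_add a z pos_lt z_series M).
  assert (P : 0 < 2 ^ pos a M) by (apply pow_lt; lra).
  assert (/ 2 ^ pos a M < 2 / 2 ^ pos a M) by (pose proof (Rinv_0_lt_compat _ P); unfold Rdiv; lra).
  destruct (exists_trunc_bracket (z - h) N M) as [n [Hn [H1 H2]]]; [lra | lra |].
  exists n, (2 ^ pos a (S n) * h - scaled_tail a z (S n)).
  assert (Pm : 0 < 2 ^ pos a (S n)) by (apply pow_lt; lra).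
  rewrite scaled_tail_eq, trunc_S in * by assumption.
  split; [assumption|]. split; [split|field; lra].
  - apply Rlt_0_minus, Rmult_lt_compat_l; lra.
  - assert (2 ^ pos a (S n) * (h - (z - (trunc a n + / 2 ^ pos a (S n)))) <= 1).
    { replace 1 with (2 ^ pos a (S n) * / 2 ^ pos a (S n)) by (field; lra).
      apply Rmult_le_compat_l; lra. }
    nra.
Qed.

Lemma scaled_tail_between n :
  let k := (pos a (S (S n)) - pos a (S n))%nat in
  (1 <= k)%nat /\ INR k = INR (a (S (S n))) - INR (a (S n)) /\
  / 2 ^ k < scaled_tail a z (S n) < 2 / 2 ^ k.
Proof.
  pose proof (pos_lt (S n)). split; [lia|]. split.
  - rewrite minus_INR by lia. reflexivity.
  - apply scaled_tail_bounds; assumption.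
Qed.

Lemma left_quotient_ge_exponent n r : 0 < r <= 1 ->
  - left_exponent a (S n) - 1
  <= left_quotient takagi z ((r + scaled_tail a z (S n)) / 2 ^ pos a (S n)).
Proof.
  intros Hr. rewrite left_quotient_takagi by assumption.
  destruct (scaled_tail_between n) as [Hk [Ek Ht]].
  set (k := (pos a (S (S n)) - pos a (S n))%nat) in *.
  destruct (Nat.log2_spec k ltac:(lia)) as [Hlog _].
  pose proof (quotient_correction_ge k (Nat.log2 k) _ r Hk Hlog Ht Hr).
  pose proof (log2_INR_bounds k Hk). unfold left_exponent. rewrite <- Ek, !S_INR in *.
  simpl pos. lra.
Qed.

Lemma left_quotient_le_exponent n : exists r, 0 < r <= 1 /\
  left_quotient takagi z ((r + scaled_tail a z (S n)) / 2 ^ pos a (S n))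
  <= - left_exponent a (S n) + 10.
Proof.
  destruct (scaled_tail_between n) as [Hk [Ek Ht]].
  set (k := (pos a (S (S n)) - pos a (S n))%nat) in *.
  destruct (Nat.log2_spec k ltac:(lia)) as [_ Hlog].
  assert (Hle : (Nat.log2 k <= k)%nat) by (apply Nat.log2_le_lin; lia).
  assert (Hr : 0 < / 2 ^ (k - Nat.log2 k) <= 1).
  { split; [apply Rinv_0_lt_compat, pow_lt; lra|].
    rewrite <- Rinv_1. apply Rinv_le_contravar; [lra | apply pow_R1_Rle; lra]. }
  exists (/ 2 ^ (k - Nat.log2 k)). split; [exact Hr|].
  rewrite left_quotient_takagi by assumption.
  pose proof (quotient_correction_le_at_pow2 k (Nat.log2 k) _ Hk Hlog Hle Ht).
  pose proof (log2_INR_bounds k Hk). unfold left_exponent. rewrite <- Ek, !S_INR in *.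
  simpl pos. lra.
Qed.

Lemma left_quotient_le_pos n r : 0 < r <= 1 ->
  left_quotient takagi z ((r + scaled_tail a z (S n)) / 2 ^ pos a (S n))
  <= INR (a (S (S n))) - 2 * INR (S n) + 1.
Proof.
  intros Hr. rewrite left_quotient_takagi by assumption.
  destruct (scaled_tail_between n) as [Hk [Ek Ht]].
  pose proof (quotient_correction_le _ _ r Hk Ht Hr). rewrite Ek in *. simpl pos. lra.
Qed.

Lemma left_quotient_at_trunc n :
  INR (a (S n)) - 2 * INR (S n) + 1 <= left_quotient takagi z (z - trunc a n).
Proof.
  assert (E : z - trunc a n = (1 + scaled_tail a z (S n)) / 2 ^ pos a (S n)).
  { rewrite scaled_tail_eq, trunc_S by assumption. field. apply pow_nonzero; lra. }
  rewrite E, left_quotient_takagi by (assumption || lra). unfold quotient_correction. rewrite takagi_1.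
  pose proof (scaled_tail_pos a z pos_lt z_series (S n)).
  pose proof (scaled_tail_lt_1 a z pos_lt z_series z_nondyadic (S n)).
  pose proof (takagi_bounds (scaled_tail a z (S n)) ltac:(lra)).
  assert (1 <= (2 * 1 + takagi (scaled_tail a z (S n)) - 0) / (1 + scaled_tail a z (S n))).
  { apply (Rmult_le_reg_r (1 + scaled_tail a z (S n))); [lra|]. field_simplify; lra. }
  simpl pos. lra.
Qed.

Theorem takagi_left_quotient_p_infty :
  filterlim (left_quotient takagi z) (at_right 0) (Rbar_locally p_infty)
  <-> is_lim_seq (left_exponent a) m_infty.
Proof.
  rewrite filterlim_at_right_0_p_infty, <- is_lim_seq_spec. split.
  - intros H M. destruct (H (- M + 10)) as [d [Hd Hh]].
    destruct (pos_eventually_small d Hd) as [N HN]. exists (S N). intros [|n] Hn; [lia|].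
    destruct (left_quotient_le_exponent n) as [r [Hr Hq]].
    pose proof (scaled_tail_pos a z pos_lt z_series (S n)).
    pose proof (scaled_tail_lt_1 a z pos_lt z_series z_nondyadic (S n)).
    assert (P : 0 < 2 ^ pos a (S n)) by (apply pow_lt; lra).
    specialize (HN (S n) ltac:(lia)).
    assert ((r + scaled_tail a z (S n)) / 2 ^ pos a (S n) <= 2 / 2 ^ pos a (S n))
      by (apply Rmult_le_compat_r; [left; apply Rinv_0_lt_compat |]; lra).
    assert (0 < (r + scaled_tail a z (S n)) / 2 ^ pos a (S n)) by (apply Rdiv_lt_0_compat; lra).
    set (h := (r + scaled_tail a z (S n)) / 2 ^ pos a (S n)) in *.
    specialize (Hh h ltac:(lra)). lra.
  - intros H M. destruct (H (- M - 1)) as [N HN].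
    exists (z - trunc a N). split; [pose proof (trunc_lt a z pos_lt z_series N); lra|].
    intros h Hh. destruct (left_increment_decompose N h Hh) as [n [r [Hn [Hr ->]]]].
    pose proof (left_quotient_ge_exponent n r Hr). specialize (HN (S n) ltac:(lia)). lra.
Qed.

Theorem takagi_left_quotient_m_infty :
  filterlim (left_quotient takagi z) (at_right 0) (Rbar_locally m_infty)
  <-> is_lim_seq (fun n => INR (a (S n)) - 2 * INR n) m_infty.
Proof.
  rewrite filterlim_at_right_0_m_infty, <- is_lim_seq_spec. split.
  - intros H M. destruct (H (M - 1)) as [d [Hd Hh]].
    destruct (pos_eventually_small d Hd) as [N HN]. exists N. intros n Hn.
    pose proof (left_quotient_at_trunc n). specialize (HN n Hn).
    pose proof (le_trunc_add a z pos_lt z_series n). pose proof (trunc_lt a z pos_lt z_series n).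
    assert (/ 2 ^ pos a n < 2 / 2 ^ pos a n)
      by (pose proof (Rinv_0_lt_compat (2 ^ pos a n) (pow_lt 2 _ ltac:(lra))); unfold Rdiv; lra).
    specialize (Hh (z - trunc a n) ltac:(lra)). rewrite S_INR in *. lra.
  - intros H M. destruct (H (M - 1)) as [N HN].
    exists (z - trunc a N). split; [pose proof (trunc_lt a z pos_lt z_series N); lra|].
    intros h Hh. destruct (left_increment_decompose N h Hh) as [n [r [Hn [Hr ->]]]].
    pose proof (left_quotient_le_pos n r Hr). specialize (HN (S n) ltac:(lia)). lra.
Qed.

End LeftDerivative.

(* [count_pos a m] is the number of n >= 1 with a_n <= m, i.e. the number of binary digits 1
   among the first m digits. *)
Fixpoint count_pos (a : nat -> nat) m : nat :=
  match m with
  | O => O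
  | S m' => if Nat.ltb (S m') (pos a (S (count_pos a m'))) then count_pos a m'
            else S (count_pos a m')
  end.

Definition is_position (a : nat -> nat) m := m = pos a (count_pos a m) /\ (1 <= count_pos a m)%nat.

(* The integer part of 2^m z. *)
Definition floor_scaled a m := (numer a (count_pos a m) * 2 ^ (m - pos a (count_pos a m)))%nat.

Section Counting.
Variable a : nat -> nat.
Hypothesis pos_lt : forall n, (pos a n < pos a (S n))%nat.

Lemma count_pos_bracket m : (pos a (count_pos a m) <= m < pos a (S (count_pos a m)))%nat.
Proof.
  induction m as [|m IH]; [pose proof (pos_lt 0); simpl in *; lia|].
  cbn [count_pos]. destruct (Nat.ltb_spec (S m) (pos a (S (count_pos a m)))); [lia|].
  pose proof (pos_lt (S (count_pos a m))). lia.
Qed.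

Lemma count_pos_S m :
  (count_pos a (S m) = count_pos a m /\ ~ is_position a (S m))
  \/ (count_pos a (S m) = S (count_pos a m) /\ is_position a (S m)).
Proof.
  pose proof (count_pos_bracket m). unfold is_position. cbn [count_pos].
  destruct (Nat.ltb_spec (S m) (pos a (S (count_pos a m)))).
  - left. split; [reflexivity | intros [E _]; lia].
  - right. split; [reflexivity | split; lia].
Qed.

Lemma count_pos_pos n : count_pos a (pos a n) = n.
Proof.
  pose proof (count_pos_bracket (pos a n)).
  destruct (Compare_dec.lt_eq_lt_dec (count_pos a (pos a n)) n) as [[L|L]|L]; [|assumption|].
  - pose proof (pos_le_mono a pos_lt _ n L). lia.
  - pose proof (pos_lt_mono a pos_lt n _ L). lia.
Qed.

Lemma count_pos_ge N m : (pos a N <= m)%nat -> (N <= count_pos a m)%nat.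
Proof.
  intros H. pose proof (count_pos_bracket m).
  destruct (Compare_dec.le_lt_dec N (count_pos a m)) as [|L]; [assumption|].
  pose proof (pos_le_mono a pos_lt _ N L). lia.
Qed.

Lemma floor_scaled_parity m : (1 <= m)%nat ->
  (is_position a m -> Nat.Odd (floor_scaled a m)) /\ (~ is_position a m -> Nat.Even (floor_scaled a m)).
Proof.
  intros Hm. unfold is_position, floor_scaled. pose proof (count_pos_bracket m).
  set (n := count_pos a m) in *. split.
  - intros [E Hn]. rewrite <- E, Nat.sub_diag, Nat.pow_0_r, Nat.mul_1_r.
    destruct n as [|n]; [lia|]. pose proof (pos_lt n).
    change (numer a (S n)) with (numer a n * 2 ^ (pos a (S n) - pos a n) + 1)%nat.
    replace (pos a (S n) - pos a n)%nat with (S (pos a (S n) - pos a n - 1)) by lia.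
    exists (numer a n * 2 ^ (pos a (S n) - pos a n - 1))%nat. simpl; lia.
  - intros Hn. destruct (Nat.eq_dec m (pos a n)) as [E|E].
    + assert (n = 0%nat) as -> by (destruct n; [reflexivity | exfalso; apply Hn; split; lia]).
      exists 0%nat. reflexivity.
    + replace (m - pos a n)%nat with (S (m - pos a n - 1)) by lia.
      exists (numer a n * 2 ^ (m - pos a n - 1))%nat. simpl; lia.
Qed.

Variable z : R.
Hypothesis z_series : is_series (fun k => (/2) ^ a (S k)) z.
Hypothesis z_nondyadic : ~ dyadic z.

Lemma floor_scaled_bounds m : INR (floor_scaled a m) < 2 ^ m * z < INR (floor_scaled a m) + 1.
Proof.
  pose proof (count_pos_bracket m). unfold floor_scaled. set (n := count_pos a m) in *.
  assert (E : 2 ^ m * z - INR (numer a n * 2 ^ (m - pos a n))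
              = 2 ^ (m - pos a n) * scaled_tail a z n).
  { unfold scaled_tail. rewrite mult_INR, INR_pow2.
    replace m with (pos a n + (m - pos a n))%nat at 1 by lia. rewrite pow_add. ring. }
  pose proof (scaled_tail_pos a z pos_lt z_series n).
  pose proof (scaled_tail_bounds a z pos_lt z_series z_nondyadic n) as [_ Hup].
  assert (P : 0 < 2 ^ (m - pos a n)) by (apply pow_lt; lra).
  assert (Pd : 0 < 2 ^ (pos a (S n) - pos a n)) by (apply pow_lt; lra).
  assert (Hle : 2 * 2 ^ (m - pos a n) <= 2 ^ (pos a (S n) - pos a n))
    by (change (2 * 2 ^ (m - pos a n)) with (2 ^ S (m - pos a n)); apply Rle_pow; lra || lia).
  assert (2 ^ (m - pos a n) * scaled_tail a z n < 1).
  { apply Rlt_le_trans with (2 ^ (m - pos a n) * (2 / 2 ^ (pos a (S n) - pos a n))).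
    - apply Rmult_lt_compat_l; lra.
    - apply (Rmult_le_reg_r (2 ^ (pos a (S n) - pos a n))); [lra|]. field_simplify; lra. }
  assert (0 < 2 ^ (m - pos a n) * scaled_tail a z n) by (apply Rmult_lt_0_compat; lra).
  lra.
Qed.

End Counting.

Section Complement.
Variables (a b : nat -> nat) (z : R).
Hypotheses (a_pos_lt : forall n, (pos a n < pos a (S n))%nat)
           (b_pos_lt : forall n, (pos b n < pos b (S n))%nat)
           (a_series : is_series (fun k => (/2) ^ a (S k)) z)
           (b_series : is_series (fun k => (/2) ^ b (S k)) (1 - z))
           (z_nondyadic : ~ dyadic z) (z_nondyadic' : ~ dyadic (1 - z)).

Lemma floor_scaled_complement m : (floor_scaled a m + floor_scaled b m + 1 = 2 ^ m)%nat.
Proof.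
  pose proof (floor_scaled_bounds a a_pos_lt z a_series z_nondyadic m).
  pose proof (floor_scaled_bounds b b_pos_lt (1 - z) b_series z_nondyadic' m).
  assert (INR (floor_scaled a m + floor_scaled b m) < INR (2 ^ m))
    by (rewrite plus_INR, INR_pow2; lra).
  assert (INR (2 ^ m) < INR (floor_scaled a m + floor_scaled b m + 2))
    by (rewrite !plus_INR, INR_pow2; simpl; lra).
  apply INR_lt in H1, H2. lia.
Qed.

Lemma is_position_xor m : (1 <= m)%nat ->
  (is_position a m /\ ~ is_position b m) \/ (~ is_position a m /\ is_position b m).
Proof.
  intros Hm. pose proof (floor_scaled_complement m) as Hsum.
  destruct (floor_scaled_parity a a_pos_lt m Hm) as [Aodd Aeven].
  destruct (floor_scaled_parity b b_pos_lt m Hm) as [Bodd Beven].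
  assert (Hev : Nat.Even (2 ^ m)).
  { exists (2 ^ (m - 1))%nat. replace m with (S (m - 1)) at 1 by lia. simpl; lia. }
  destruct (Classical_Prop.classic (is_position a m)) as [Ma|Ma],
           (Classical_Prop.classic (is_position b m)) as [Mb|Mb]; [| tauto | tauto |].
  - destruct (Aodd Ma) as [p Hp], (Bodd Mb) as [q Hq], Hev as [e He]. lia.
  - destruct (Aeven Ma) as [p Hp], (Beven Mb) as [q Hq], Hev as [e He]. lia.
Qed.

Lemma count_pos_complement m : (count_pos a m + count_pos b m = m)%nat.
Proof.
  induction m as [|m IH]; [reflexivity|].
  destruct (is_position_xor (S m) ltac:(lia)) as [[Ma Mb]|[Ma Mb]];
  destruct (count_pos_S a a_pos_lt m) as [[Ea Fa]|[Ea Fa]];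
  destruct (count_pos_S b b_pos_lt m) as [[Eb Fb]|[Eb Fb]]; try contradiction; lia.
Qed.

Lemma is_lim_seq_count_pos_swap l :
  is_lim_seq (fun m => INR m - 2 * INR (count_pos a m)) l
  <-> is_lim_seq (fun m => INR m - 2 * INR (count_pos b m)) (Rbar_opp l).
Proof.
  rewrite is_lim_seq_opp.
  assert (E : forall m, - (INR m - 2 * INR (count_pos a m)) = INR m - 2 * INR (count_pos b m)).
  { intros m. rewrite <- (count_pos_complement m) at 1 3. rewrite plus_INR. ring. }
  split; apply is_lim_seq_ext; intros m; rewrite E; reflexivity.
Qed.

End Complement.

Lemma is_lim_seq_pos_succ_m_infty a : (forall n, (pos a n < pos a (S n))%nat) ->
  is_lim_seq (fun n => INR (a (S n)) - 2 * INR n) m_infty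
  <-> is_lim_seq (fun m => INR m - 2 * INR (count_pos a m)) m_infty.
Proof.
  intros pos_lt. rewrite <- !is_lim_seq_spec. split.
  - intros H M. destruct (H M) as [N HN]. exists (pos a N). intros m Hm.
    pose proof (count_pos_ge a pos_lt N m Hm) as Hc. specialize (HN _ Hc).
    pose proof (count_pos_bracket a pos_lt m) as [_ Hup].
    apply lt_INR in Hup. simpl in *. lra.
  - intros H M. destruct (H (M - 2)) as [N HN]. exists N. intros n Hn.
    pose proof (pos_ge a pos_lt (S n)). specialize (HN (pos a (S n)) ltac:(lia)).
    rewrite count_pos_pos, S_INR in HN by exact pos_lt. simpl in HN. lra.
Qed.

Lemma is_lim_seq_pos_p_infty b : (forall n, (pos b n < pos b (S n))%nat) ->
  is_lim_seq (fun n => INR (b n) - 2 * INR n) p_infty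
  <-> is_lim_seq (fun m => INR m - 2 * INR (count_pos b m)) p_infty.
Proof.
  intros pos_lt. rewrite <- !is_lim_seq_spec. split.
  - intros H M. destruct (H M) as [N HN]. exists (pos b (S N)). intros m Hm.
    pose proof (count_pos_ge b pos_lt (S N) m Hm) as Hc.
    pose proof (count_pos_bracket b pos_lt m) as [Hlow _].
    destruct (count_pos b m) as [|c] eqn:Ec; [lia|]. specialize (HN (S c) ltac:(lia)).
    apply le_INR in Hlow. simpl in *. lra.
  - intros H M. destruct (H M) as [N HN]. exists (S N). intros [|n] Hn; [lia|].
    pose proof (pos_ge b pos_lt (S n)). specialize (HN (pos b (S n)) ltac:(lia)).
    rewrite count_pos_pos in HN by exact pos_lt. simpl pos in HN. lra.
Qed.

Lemma nondyadic_1m x : ~ dyadic x -> ~ dyadic (1 - x).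
Proof.
  intros Hx [k [m E]]. apply Hx. exists (Z.of_nat (2 ^ m) - k)%Z, m.
  rewrite minus_IZR, <- INR_IZR_INZ, INR_pow2.
  assert (0 < 2 ^ m) by (apply pow_lt; lra).
  replace x with (1 - IZR k / 2 ^ m) by lra. field. lra.
Qed.

Theorem theorem1 (x : R) (a b : nat -> nat) :
  0 < x < 1 -> ~ dyadic x ->
  binary_positions a x -> binary_positions b (1 - x) ->
  (right_deriv_is takagi x p_infty <->
     is_lim_seq (fun n => INR (a n) - 2 * INR n) p_infty) /\
  (left_deriv_is takagi x p_infty <->
     is_lim_seq (fun n => INR (a (S n)) - 2 * INR (a n) + 2 * INR n
                          - log2 (INR (a (S n)) - INR (a n))) m_infty) /\
  (right_deriv_is takagi x m_infty <->
     is_lim_seq (fun n => INR (b (S n)) - 2 * INR (b n) + 2 * INR n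
                          - log2 (INR (b (S n)) - INR (b n))) m_infty) /\
  (left_deriv_is takagi x m_infty <->
     is_lim_seq (fun n => INR (b n) - 2 * INR n) p_infty).
Proof.
  intros _ Hx Ha Hb.
  pose proof (binary_positions_pos_lt a x Ha) as a_lt.
  pose proof (binary_positions_pos_lt b (1 - x) Hb) as b_lt.
  destruct Ha as [_ [_ a_series]], Hb as [_ [_ b_series]].
  pose proof (nondyadic_1m x Hx) as Hx'.
  pose proof (is_lim_seq_count_pos_swap a b x a_lt b_lt a_series b_series Hx Hx') as Hswap.
  split; [|split; [|split]].
  - rewrite right_deriv_is_reflect by exact takagi_1m. simpl Rbar_opp.
    rewrite (takagi_left_quotient_m_infty b (1 - x)), is_lim_seq_pos_succ_m_infty,
            is_lim_seq_pos_p_infty, (Hswap p_infty) by assumption.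
    reflexivity.
  - rewrite left_deriv_is_iff. apply takagi_left_quotient_p_infty; assumption.
  - rewrite right_deriv_is_reflect by exact takagi_1m. simpl Rbar_opp.
    apply takagi_left_quotient_p_infty; assumption.
  - rewrite left_deriv_is_iff, (takagi_left_quotient_m_infty a x), is_lim_seq_pos_succ_m_infty,
            is_lim_seq_pos_p_infty, (Hswap m_infty) by assumption.
    reflexivity.
Qed.
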